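(* Let $\mathbb{K}\in\{\mathbb{R},\mathbb{C}\}$, $\star\in\{*,T\}$, $\epsilon_1,\epsilon_2\in\{1,-1\}$, and let $Q(\lambda)=\lambda^2M+\lambda D+K\in\mathbb{K}^{n\times n}[\lambda]$ satisfy $M^\star=\epsilon_1M$, $D^\star=\epsilon_2D$, $K^\star=\epsilon_1K$. Let $(\lambda_1,x_1)$ and $(\lambda_2,x_2)$ be eigenpairs of $Q(\lambda)$ (with $\lambda_i\in\mathbb{K}$, $x_i\in\mathbb{K}^n$). If $\lambda_2\neq\epsilon_1\epsilon_2\lambda_1^\star$, then $\lambda_2x_1^\star Mx_2+\epsilon_1\epsilon_2\lambda_1^\star x_1^\star Mx_2+x_1^\star Dx_2=0$.
   Context: For a matrix or vector $A$, $A^\star$ is $A^*$ (conjugate transpose) if $\star=*$ and $A^T$ if $\star=T$; for $\lambda\in\mathbb{C}$, $\lambda^\star=\overline{\lambda}$ if $\star=*$ and $\lambda^\star=\lambda$ if $\star=T$. An eigenpair $(\lambda_0,x_0)$ of $Q$ means $x_0\neq0$ and $(\lambda_0^2M+\lambda_0D+K)x_0=0$. *)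

From HB Require Import structures.
From mathcomp Require Import all_boot all_order all_algebra.
From mathcomp Require Import complex.
From mathcomp Require Import reals.
Set Implicit Arguments. Unset Strict Implicit. Unset Printing Implicit Defensive.
Import Order.TTheory GRing.Theory Num.Theory.
Local Open Scope ring_scope.

Definition Kof (R : realType) (isC : bool) : numFieldType :=
  if isC then (R[i] : numFieldType) else (R : numFieldType).

Definition kconj (R : realType) (isC : bool) : Kof R isC -> Kof R isC :=
  match isC as b return Kof R b -> Kof R b with
  | true => fun z : R[i] => Num.conj z
  | false => fun x => x
  end.

(* The two choices of star: * (conjugate transpose) or T (transpose). *)
Inductive startype := StarC | StarT.

Definition sc (R : realType) (isC : bool) (s : startype) (x : Kof R isC) :=
  match s with StarC => kconj x | StarT => x end.

Definition smx (R : realType) (isC : bool) (s : startype) (m n : nat)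
  (A : 'M[Kof R isC]_(m, n)) : 'M[Kof R isC]_(n, m) :=
  map_mx (@sc R isC s) A^T.

Definition eigenpair (F : nzRingType) (n : nat) (M D K : 'M[F]_n)
  (lam : F) (x : 'cV[F]_n) : Prop :=
  x != 0 /\ (lam ^+ 2 *: M + lam *: D + K) *m x = 0.

(* Transposing (resp. conjugate-transposing) [Q(l1) x1 = 0] with the
   (anti)symmetries of M, D, K shows that [x1^star] is a left eigenvector of
   Q for the eigenvalue [mu = e1 e2 l1^star].  Then
   [0 = x1^star (Q(l2) - Q(mu)) x2 = (l2 - mu) x1^star ((l2 + mu) M + D) x2],
   and the factor [l2 - mu] is nonzero. *)
From HB Require Import structures.
From mathcomp Require Import all_boot all_order all_algebra.
From mathcomp Require Import complex reals.
From mathcomp Require Import ring.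
Import Order.TTheory GRing.Theory Num.Theory.
Set Implicit Arguments.
Unset Strict Implicit.
Unset Printing Implicit Defensive.
Local Open Scope ring_scope.

Section QuadraticEigenvectors.

Variables (F : fieldType) (n : nat) (M D K : 'M[F]_n).

Definition qmx (lam : F) : 'M[F]_n := lam ^+ 2 *: M + lam *: D + K.

Lemma qmxB (a b : F) : qmx a - qmx b = (a - b) *: ((a + b) *: M + D).
Proof. by apply/matrixP => i j; rewrite !mxE; ring. Qed.

Lemma left_right_eigenvectors_orthogonal (mu lam : F) (y : 'rV_n) (x : 'cV_n) :
  y *m qmx mu = 0 -> qmx lam *m x = 0 -> lam != mu ->
  lam *: (y *m M *m x) + mu *: (y *m M *m x) + y *m D *m x = 0.
Proof.
move=> left_mu right_lam lam_neq_mu.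
have : y *m (qmx lam - qmx mu) *m x = 0.
  by rewrite mulmxBr mulmxBl left_mu mul0mx subr0 -mulmxA right_lam mulmx0.
rewrite qmxB -scalemxAr -scalemxAl => /eqP.
rewrite scalemx_eq0 subr_eq0 (negbTE lam_neq_mu) /= => /eqP <-.
by rewrite mulmxDr mulmxDl -!scalemxAr -!scalemxAl scalerDl.
Qed.

Variables (f : {rmorphism F -> F}) (e1 e2 : F).
Hypotheses (e1_sqr : e1 * e1 = 1) (e2_sqr : e2 * e2 = 1).
Hypotheses (M_star : map_mx f M^T = e1 *: M) (D_star : map_mx f D^T = e2 *: D)
  (K_star : map_mx f K^T = e1 *: K).

Lemma qmx_star (lam : F) :
  map_mx f (qmx lam)^T = e1 *: qmx (e1 * e2 * f lam).
Proof.
rewrite /qmx !linearD /= !linearZ /= !map_mxD !map_mxZ M_star D_star K_star.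
rewrite rmorphXn !scalerA; congr (_ *: _ + _ *: _ + _).
  transitivity ((e1 * e1) * (e2 * e2) * (f lam ^+ 2 * e1)); last by ring.
  by rewrite e1_sqr e2_sqr !mul1r.
transitivity ((e1 * e1) * (f lam * e2)); last by ring.
by rewrite e1_sqr mul1r.
Qed.

Lemma star_left_eigenvector (lam : F) (x : 'cV_n) :
  qmx lam *m x = 0 -> map_mx f x^T *m qmx (e1 * e2 * f lam) = 0.
Proof.
move=> right_lam.
have e1_neq0 : e1 != 0.
  by apply: contra_eq_neq e1_sqr => ->; rewrite mul0r eq_sym oner_neq0.
have : map_mx f (qmx lam *m x)^T = 0 by rewrite right_lam trmx0 map_mx0.
rewrite trmx_mul map_mxM qmx_star -scalemxAr => /eqP.
by rewrite scalemx_eq0 (negbTE e1_neq0) => /eqP.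
Qed.

End QuadraticEigenvectors.

Lemma sc_rmorphism (R : realType) (isC : bool) (s : startype) :
  exists f : {rmorphism Kof R isC -> Kof R isC}, sc s =1 f.
Proof.
case: s isC => [[]|isC]; last by exists idfun.
- by exists (Num.conj : {rmorphism R[i] -> R[i]}).
- by exists idfun.
Qed.

Theorem corollary2p5 (R : realType) (isC : bool) (s : startype)
  (e1 e2 : Kof R isC) (n : nat) (M D K : 'M[Kof R isC]_n)
  (lam1 lam2 : Kof R isC) (x1 x2 : 'cV[Kof R isC]_n) :
  (e1 = 1 \/ e1 = -1) -> (e2 = 1 \/ e2 = -1) ->
  smx s M = e1 *: M -> smx s D = e2 *: D -> smx s K = e1 *: K ->
  eigenpair M D K lam1 x1 -> eigenpair M D K lam2 x2 ->
  lam2 != e1 * e2 * sc s lam1 ->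
  lam2 *: (smx s x1 *m M *m x2) + (e1 * e2 * sc s lam1) *: (smx s x1 *m M *m x2)
    + smx s x1 *m D *m x2 = 0.
Proof.
move=> e1_sign e2_sign M_star D_star K_star [_ eig1] [_ eig2] lam2_neq.
have sign_sqr (e : Kof R isC) : e = 1 \/ e = -1 -> e * e = 1.
  by case=> ->; rewrite ?mulrNN mulr1.
have [f sc_f] := sc_rmorphism R isC s.
have smx_f m k (A : 'M_(m, k)) : smx s A = map_mx f A^T by apply: eq_map_mx.
rewrite !smx_f in M_star D_star K_star *; rewrite sc_f in lam2_neq *.
apply: left_right_eigenvectors_orthogonal eig2 lam2_neq.
exact: (star_left_eigenvector (sign_sqr _ e1_sign) (sign_sqr _ e2_sign)
  M_star D_star K_star eig1).
Qed.
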